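(* For every odd integer $s\ge3$ there exists a linear $(1,2,s,2)$-AONT.
   Context: A linear $(t_i,t_o,s,q)$-AONT is given by an invertible $s\times s$ matrix $M$ over $\mathbb{F}_q$ defining the map $\mathbf{x}\mapsto\mathbf{y}=\mathbf{x}M^{-1}$ on row vectors of $\mathbb{F}_q^s$, such that for every set $I$ of $t_i$ input coordinates and every set $J$ of $s-t_o$ output coordinates, the pair $((x_i)_{i\in I},(y_j)_{j\in J})$ takes every value in $\mathbb{F}_q^{t_i+s-t_o}$ equally often as $\mathbf{x}$ ranges over $\mathbb{F}_q^s$. Equivalently, $M$ is invertible and every $t_o\times t_i$ submatrix of $M$ has rank $t_i$. *)

From mathcomp Require Import all_boot all_order all_algebra all_field.
Set Implicit Arguments. Unset Strict Implicit. Unset Printing Implicit Defensive.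
Import GRing.Theory.
Local Open Scope ring_scope.

Definition submx_set (F : fieldType) (s : nat) (M : 'M[F]_s)
  (R C : {set 'I_s}) : 'M[F]_(#|R|, #|C|) :=
  \matrix_(i < #|R|, j < #|C|) M (enum_val i) (enum_val j).

(* Linear (t_i, t_o, s, q)-AONT given by the matrix M over F (with |F| = q):
   M is invertible and every t_o x t_i submatrix of M has rank t_i. *)
Definition linear_AONT (F : fieldType) (ti to s : nat) (M : 'M[F]_s) : Prop :=
  M \in unitmx /\
  forall (R C : {set 'I_s}), #|R| = to -> #|C| = ti ->
    \rank (submx_set M R C) = ti.

From mathcomp Require Import all_boot all_order all_algebra all_field.
Set Implicit Arguments. Unset Strict Implicit. Unset Printing Implicit Defensive.
Import GRing.Theory.
Local Open Scope ring_scope.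

(* A 2 x 1 submatrix has rank 1 unless it vanishes, so a linear (1,2)-AONT is
   just an invertible matrix none of whose columns has two zero entries.  Take
   the all-ones matrix with its diagonal zeroed except at the top-left corner:
   if x M = 0, column 0 gives sum_i x_i = 0 and column j <> 0 gives
   sum_i x_i - x_j = 0, so x = 0 and M is invertible over any field. *)

Lemma linear_AONT_1_2 (F : fieldType) (s : nat) (M : 'M[F]_s) :
  M \in unitmx ->
  (forall i1 i2 j, M i1 j = 0 -> M i2 j = 0 -> i1 = i2) ->
  linear_AONT 1 2 M.
Proof.
move=> M_unit col_zero_uniq; split=> // R C R2 C1.
apply/eqP; rewrite eqn_leq -{1}C1 rank_leq_col lt0n mxrank_eq0.
have r0_lt : (0 < #|R|)%N by rewrite R2.
have r1_lt : (1 < #|R|)%N by rewrite R2.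
have c_lt : (0 < #|C|)%N by rewrite C1.
pose r0 := Ordinal r0_lt; pose r1 := Ordinal r1_lt; pose c := Ordinal c_lt.
apply/negP => /eqP/matrixP sub0.
have := sub0 r0 c; have := sub0 r1 c; rewrite !mxE => M1c M0c.
by have /enum_val_inj/(congr1 val) := col_zero_uniq _ _ _ M0c M1c.
Qed.

Section OnesPuncturedMatrix.
Variables (F : fieldType) (n : nat).

Definition ones_punctured_mx : 'M[F]_n.+1 :=
  \matrix_(i, j) (if (i == j) && (j != ord0) then 0 else 1).

Lemma ones_punctured_mx_eq0 i j : ones_punctured_mx i j = 0 -> i = j.
Proof. by rewrite mxE; case: eqP => // _; rewrite /= => /eqP; rewrite oner_eq0. Qed.

Lemma mul_ones_punctured_mx (x : 'rV[F]_n.+1) j :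
  (x *m ones_punctured_mx) 0 j =
  \sum_i x 0 i - (if j == ord0 then 0 else x 0 j).
Proof.
rewrite [\sum_i x 0 i](bigD1 j) //= !mxE (bigD1 j) //= mxE eqxx.
under eq_bigr => i /negbTE ij do rewrite mxE ij mulr1.
by case: eqVneq => _ /=; rewrite ?mulr0 ?mulr1 ?subr0 // add0r addrAC subrr add0r.
Qed.

Lemma ones_punctured_mx_unit : ones_punctured_mx \in unitmx.
Proof.
rewrite -row_free_unit; apply: inj_row_free => x x_ker.
have col j : \sum_i x 0 i - (if j == ord0 then 0 else x 0 j) = 0.
  by rewrite -mul_ones_punctured_mx x_ker mxE.
have sum0 : \sum_i x 0 i = 0 by have := col ord0; rewrite eqxx subr0.
have x_nz j : j != ord0 -> x 0 j = 0.
  by move=> /negbTE j_nz; have /eqP := col j; rewrite j_nz sum0 sub0r oppr_eq0 => /eqP.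
apply/rowP => j; rewrite mxE; case: (eqVneq j ord0) => [->|]; last exact: x_nz.
by rewrite -sum0 (bigD1 ord0) //= big1 ?addr0.
Qed.

End OnesPuncturedMatrix.

Theorem mainTheorem11 :
  forall s : nat, odd s -> (3 <= s)%N ->
    exists M : 'M['F_2]_s, linear_AONT 1 2 M.
Proof.
move=> [|n] // _ _; exists (ones_punctured_mx _ n).
apply: linear_AONT_1_2; first exact: ones_punctured_mx_unit.
by move=> i1 i2 j /ones_punctured_mx_eq0 -> /ones_punctured_mx_eq0 ->.
Qed.
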